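(* Let $N\in\mathbb{N}$, $m,M\in(0,1)$ with $m<M$, and $a_1,\dots,a_N\in[m,M]$. For $i\in[N]$ let $M_i=\frac1N\min\{m+(N-1)M,\ (N-2)(a_i-m)+\sum_{j=1}^Na_j\}$. Let $P$ be the intersection of the box $C=[m,M_1]\times\cdots\times[m,M_N]$ with the closed half-spaces $H_i=\{z\in\mathbb{R}^N\mid\sum_{j=1}^Nz_j\le(2N-2)z_i-(N-2)m\}$, $i\in[N]$. Then $P$ is a closed convex polytope in $\mathbb{R}^N$. For $N>2$, $P$ has at most $2^N$ vertices, and its vertices are exactly the points $z^{(K)}$, $K\subseteq[N]$, defined by $z^{(K)}_k=B^{(K)}$ if $k\in K$ and $z^{(K)}_k=M_k$ if $k\in[N]\setminus K$, where $B^{(K)}=\frac{(N-2)m+\sum_{l\in[N]\setminus K}M_l}{2N-2-|K|}$. For $N=1$, $P=\{m\}$, and for $N=2$, $P=\{(t,t)\in\mathbb{R}^2\mid m\le t\le M_1\}$.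
   Context: $[N]=\{1,\dots,N\}$. *)

From HB Require Import structures.
From mathcomp Require Import all_boot all_order all_algebra.
From mathcomp Require Import all_classical all_reals all_analysis.
Set Implicit Arguments. Unset Strict Implicit. Unset Printing Implicit Defensive.
Import Order.TTheory GRing.Theory Num.Theory.
Import numFieldTopology.Exports numFieldNormedType.Exports.
Local Open Scope ring_scope.
Local Open Scope classical_set_scope.

(* Points of R^N are row vectors 'rV[R]_N; coordinate k is z ord0 k,
   with indices 'I_N = {0,...,N-1} standing for [N] = {1,...,N}. *)

Definition Mbound (R : realType) (N : nat) (m M : R) (a : 'I_N -> R) (i : 'I_N) : R :=
  N%:R^-1 * Num.min (m + (N%:R - 1) * M)
                    ((N%:R - 2) * (a i - m) + \sum_(j < N) a j).

Definition boxC (R : realType) (N : nat) (m M : R) (a : 'I_N -> R) : set 'rV[R]_N :=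
  [set z : 'rV[R]_N | forall k : 'I_N, m <= z ord0 k <= Mbound m M a k].

Definition halfH (R : realType) (N : nat) (m : R) (i : 'I_N) : set 'rV[R]_N :=
  [set z : 'rV[R]_N | \sum_(j < N) z ord0 j <= (2 * N%:R - 2) * z ord0 i - (N%:R - 2) * m].

Definition P8set (R : realType) (N : nat) (m M : R) (a : 'I_N -> R) : set 'rV[R]_N :=
  boxC m M a `&` [set z : 'rV[R]_N | forall i : 'I_N, halfH m i z].

Definition conv_hull_seq (R : realType) (N : nat) (s : seq 'rV[R]_N) : set 'rV[R]_N :=
  [set z : 'rV[R]_N | exists w : 'I_(size s) -> R,
     (forall i, 0 <= w i) /\ \sum_(i < size s) w i = 1 /\
     z = \sum_(i < size s) w i *: s`_i].

Definition is_polytope (R : realType) (N : nat) (P : set 'rV[R]_N) : Prop :=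
  exists s : seq 'rV[R]_N, P = conv_hull_seq s.

Definition is_vertex (R : realType) (N : nat) (P : set 'rV[R]_N) (v : 'rV[R]_N) : Prop :=
  P v /\ forall x y (t : R), P x -> P y -> 0 < t -> t < 1 ->
    v = t *: x + (1 - t) *: y -> x = y.

Definition BK (R : realType) (N : nat) (m M : R) (a : 'I_N -> R) (K : {set 'I_N}) : R :=
  ((N%:R - 2) * m + \sum_(l < N | l \notin K) Mbound m M a l)
    / (2 * N%:R - 2 - #|K|%:R).

Definition zK (R : realType) (N : nat) (m M : R) (a : 'I_N -> R) (K : {set 'I_N}) : 'rV[R]_N :=
  \row_(k < N) (if k \in K then BK m M a K else Mbound m M a k).

From HB Require Import structures.
From mathcomp Require Import all_boot all_order all_algebra.
From mathcomp Require Import all_classical all_reals all_analysis.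
From mathcomp Require Import ring lra.
Import Order.TTheory GRing.Theory Num.Theory.
Import numFieldTopology.Exports numFieldNormedType.Exports.
Set Implicit Arguments. Unset Strict Implicit. Unset Printing Implicit Defensive.
Local Open Scope ring_scope.
Local Open Scope classical_set_scope.

(* Shifted by m, the half-space H_i says that z_i - m is at least a (2N-2)-th
   of the total excess sum_j (z_j - m).  Summing H_k over k in K shows that a
   point of P agreeing with the corner (M_1, ..., M_N) outside K has all its
   coordinates at least B^(K); hence z^(K), the least such point, is a vertex.
   Conversely, pushing such a point z away from z^(K) until some coordinate in
   K reaches its upper bound writes z as a convex combination of z^(K) and a
   point of P agreeing with the corner outside a smaller set; by induction on
   |K|, P is the convex hull of the z^(K). *)

Lemma convex_comb_eq_max (R : realDomainType) (t a b c : R) :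
  0 < t < 1 -> a <= c -> b <= c -> c = t * a + (1 - t) * b -> a = c /\ b = c.
Proof. move=> /andP [t0 t1] ac bc e; split; nra. Qed.

Lemma convex_comb_eq_min (R : realDomainType) (t a b c : R) :
  0 < t < 1 -> c <= a -> c <= b -> c = t * a + (1 - t) * b -> a = c /\ b = c.
Proof. move=> /andP [t0 t1] ac bc e; split; nra. Qed.

Section ConvexHull.
Variables (R : realType) (N : nat).
Implicit Types (x y z v : 'rV[R]_N) (s : seq 'rV[R]_N) (A : set 'rV[R]_N).

Definition is_convex A :=
  forall x y (t : R), A x -> A y -> 0 <= t <= 1 -> A (t *: x + (1 - t) *: y).

Lemma is_convex_convex_set A :
  is_convex A -> convex_set (A : set (convex_lmodType 'rV[R]_N)).
Proof. by move=> cA x y t; rewrite !inE => Ax Ay; apply: cA => //; rewrite ge0 le1. Qed.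

Lemma conv_hull_nil : conv_hull_seq [::] = set0 :> set 'rV[R]_N.
Proof.
apply/seteqP; split=> z // [w [_ [+ _]]].
by rewrite big_ord0 => /eqP; rewrite eq_sym oner_eq0.
Qed.

Lemma conv_hull_mem s x : x \in s -> conv_hull_seq s x.
Proof.
move=> xs; have xs' : (index x s < size s)%N by rewrite index_mem.
pose j0 := Ordinal xs'.
exists (fun i => (i == j0)%:R); split=> [i|]; first exact: ler0n.
split.
  by rewrite (bigD1 j0) //= eqxx big1 ?addr0 // => i /negbTE ->.
rewrite (bigD1 j0) //= eqxx scale1r big1 ?addr0 ?nth_index //.
by move=> i /negbTE ->; rewrite scale0r.
Qed.

Lemma conv_hull_convex s : is_convex (conv_hull_seq s).
Proof.
move=> _ _ t [wx [wx0 [wx1 ->]]] [wy [wy0 [wy1 ->]]] /andP [t0 t1].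
exists (fun i => t * wx i + (1 - t) * wy i); split=> [i|].
  by rewrite addr_ge0 // mulr_ge0 // subr_ge0.
split; first by rewrite big_split /= -!mulr_sumr wx1 wy1; ring.
rewrite !scaler_sumr -big_split /=; apply: eq_bigr => i _.
by rewrite [RHS]scalerDl !scalerA.
Qed.

Lemma conv_hull_cons x s z : conv_hull_seq (x :: s) z ->
  z = x \/ exists t q, [/\ 0 <= t < 1, conv_hull_seq s q & z = t *: x + (1 - t) *: q].
Proof.
case=> w [w0 [+ ->]]; rewrite !big_ord_recl /= => w1.
have rest0 : 0 <= \sum_(i < size s) w (lift ord0 i) by exact: sumr_ge0.
have [wx1|wx1] := eqVneq (w ord0) 1.
  left; rewrite wx1 scale1r big1 ?addr0 // => i _.
  have /psumr_eq0P -> // : \sum_(i < size s) w (lift ord0 i) = 0 by lra.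
  by rewrite scale0r.
have wx_lt1 : w ord0 < 1 by rewrite lt_neqAle wx1 /=; lra.
have ne0 : 1 - w ord0 != 0 by rewrite subr_eq0 eq_sym.
right; exists (w ord0), (\sum_(i < size s) (w (lift ord0 i) / (1 - w ord0)) *: s`_i).
split; first by rewrite w0.
- exists (fun i => w (lift ord0 i) / (1 - w ord0)); split=> [i|].
    by rewrite divr_ge0 // subr_ge0 ltW.
  split=> //; rewrite -mulr_suml.
  have -> : \sum_(i < size s) w (lift ord0 i) = 1 - w ord0 by lra.
  by rewrite divff.
- congr (_ + _); rewrite scaler_sumr; apply: eq_bigr => i _.
  by rewrite scalerA mulrC divfK.
Qed.

Lemma conv_hull_sub A s : is_convex A -> (forall x, x \in s -> A x) ->
  conv_hull_seq s `<=` A.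
Proof.
move=> cA; elim: s => [|x s IH] sA z; first by rewrite conv_hull_nil.
have sA' y : y \in s -> A y by move=> ys; apply: sA; rewrite inE ys orbT.
case/conv_hull_cons => [->|[t [q [/andP [t0 t1] sq ->]]]]; first exact/sA/mem_head.
by apply: cA; [exact/sA/mem_head | exact: IH | rewrite t0 ltW].
Qed.

Lemma conv_hull_vertex_mem A s v : is_convex A -> (forall x, x \in s -> A x) ->
  is_vertex A v -> conv_hull_seq s v -> v \in s.
Proof.
move=> cA; elim: s => [|x s IH] sA vA; first by rewrite conv_hull_nil.
have sA' y : y \in s -> A y by move=> ys; apply: sA; rewrite inE ys orbT.
case/conv_hull_cons => [->|[t [q [/andP [t0 t1] sq e]]]]; first exact: mem_head.
have [t_eq0|t_neq0] := eqVneq t 0.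
  move: e; rewrite t_eq0 scale0r add0r subr0 scale1r => e; subst q.
  by rewrite inE IH ?orbT.
have t_gt0 : 0 < t by rewrite lt_neqAle eq_sym t_neq0.
have xq := vA.2 x q t (sA _ (mem_head _ _)) (conv_hull_sub cA sA' sq) t_gt0 t1 e.
by rewrite e -xq -scalerDl addrC subrK scale1r mem_head.
Qed.

End ConvexHull.

Lemma closed_le_fun (T : topologicalType) (R : realType) (f g : T -> R) :
  continuous f -> continuous g -> closed [set x | f x <= g x].
Proof.
move=> cf cg; have cgf : continuous (fun x => g x - f x).
  by move=> x; exact: (continuousB (cg x) (cf x)).
have := (continuous_closedP _).1 cgf _ (@closed_ge R 0).
by congr closed; apply/seteqP; split=> x /=; rewrite subr_ge0.
Qed.

Section CutBox.
Variables (R : realType) (N : nat) (m : R) (u : 'I_N -> R).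
Implicit Types (z : 'rV[R]_N) (K : {set 'I_N}).

Definition cut_box : set 'rV[R]_N :=
  [set z : 'rV[R]_N | (forall k, m <= z ord0 k <= u k) /\ forall i, halfH m i z].

(* Written as m plus a quotient so that vertexB [set: 'I_N] = m for every N
   (the quotient is 0 / (N - 2), and 0 / 0 = 0 when N = 2); for N > 2 it is
   the B^(K) of the statement, see zK_vertexK. *)
Definition vertexB K : R :=
  m + (\sum_(l < N | l \notin K) (u l - m)) / (2 * N%:R - 2 - #|K|%:R).

Definition vertexK K : 'rV[R]_N :=
  \row_k (if k \in K then vertexB K else u k).

Definition vertices : seq 'rV[R]_N :=
  [seq vertexK K | K <- enum (powerset [set: 'I_N]%SET)].

Lemma halfHE i z :
  halfH m i z <-> \sum_j (z ord0 j - m) <= (2 * N%:R - 2) * (z ord0 i - m).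
Proof. by rewrite /halfH /= sumrB sumr_const card_ord -mulr_natr; split=> h; lra. Qed.

Lemma cut_box_convex : is_convex cut_box.
Proof.
move=> x y t [xb xH] [yb yH] /andP [t0 t1].
have t1' : 0 <= 1 - t by rewrite subr_ge0.
have coordE k : (t *: x + (1 - t) *: y) ord0 k = t * x ord0 k + (1 - t) * y ord0 k.
  by rewrite !mxE.
split=> [k|i].
  rewrite coordE; case/andP: (xb k) => xm xu; case/andP: (yb k) => ym yu.
  by apply/andP; split; nra.
apply/halfHE; rewrite coordE.
have -> : \sum_j ((t *: x + (1 - t) *: y) ord0 j - m) =
    t * \sum_j (x ord0 j - m) + (1 - t) * \sum_j (y ord0 j - m).
  rewrite (eq_bigr (fun j => t * (x ord0 j - m) + (1 - t) * (y ord0 j - m))).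
    by rewrite big_split -!mulr_sumr.
  by move=> j _; rewrite coordE; ring.
have := ler_wpM2l t0 ((halfHE i x).1 (xH i)).
have := ler_wpM2l t1' ((halfHE i y).1 (yH i)).
lra.
Qed.

Lemma cut_box_closed : closed cut_box.
Proof.
have coord k : continuous (fun z : 'rV[R]_N => z ord0 k) := @coord_continuous _ 1 N ord0 k.
have cst (r : R) : continuous (fun _ : 'rV[R]_N => r) := @cst_continuous _ R^o r.
have sum_cont : continuous (fun z : 'rV[R]_N => \sum_(j < N) z ord0 j).
  by apply: continuous_big => [|j _]; [exact: add_continuous | exact: coord].
have -> : cut_box = \bigcap_(k in [set: 'I_N]) ([set z : 'rV[R]_N | m <= z ord0 k] `&`
    [set z | z ord0 k <= u k] `&` halfH m k).
  apply/seteqP; split=> [z [zb zH] k _ | z zP]; first by case/andP: (zb k).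
  by split=> k; have [[/= mz zu] zH] := zP k I; rewrite ?mz.
apply: closed_bigI => k _; apply: closedI; first apply: closedI.
- exact: closed_le_fun.
- exact: closed_le_fun.
- apply: closed_le_fun => // z.
  exact: (continuousB (continuousM (cst _ z) (coord k z)) (cst _ z)).
Qed.

Lemma vertexB_setT : vertexB [set: 'I_N]%SET = m.
Proof. by rewrite /vertexB big_pred0 ?mul0r ?addr0 // => l; rewrite inE. Qed.

Lemma vertexB_proper K : K != finset.set0 -> K != [set: 'I_N]%SET ->
  0 < 2 * N%:R - 2 - #|K|%:R :> R /\
  (vertexB K - m) * (2 * N%:R - 2 - #|K|%:R) = \sum_(l < N | l \notin K) (u l - m).
Proof.
rewrite -card_gt0 -properT => K_gt0 /proper_card; rewrite cardsT card_ord => K_ltN.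
have : (1 + #|K|)%:R <= N%:R :> R by rewrite ler_nat.
have : 1 <= #|K|%:R :> R by rewrite ler1n.
rewrite natrD => K1 KN; have d_gt0 : 0 < 2 * N%:R - 2 - #|K|%:R :> R by lra.
by split=> //; rewrite addrC addKr divfK ?gt_eqF.
Qed.

Lemma vertexB_le_coord K z : K != finset.set0 -> cut_box z ->
  (forall l, l \notin K -> z ord0 l = u l) -> forall j, vertexB K <= z ord0 j.
Proof.
move=> K0 [zb zH] zU j.
have [->|KT] := eqVneq K [set: 'I_N]%SET; first by rewrite vertexB_setT; case/andP: (zb j).
have [d_gt0 vertexBE] := vertexB_proper K0 KT.
set b := vertexB K - m in vertexBE; set D := \sum_(l < N | _) _ in vertexBE.
set s := \sum_(k < N | k \in K) (z ord0 k - m).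
have total : \sum_j (z ord0 j - m) = s + D.
  by rewrite (bigID (mem K)) /=; congr (_ + _); apply: eq_bigr => l /zU ->.
have sumK : #|K|%:R * (s + D) <= (2 * N%:R - 2) * s.
  have : \sum_(k < N | k \in K) \sum_j (z ord0 j - m) <=
         \sum_(k < N | k \in K) (2 * N%:R - 2) * (z ord0 k - m).
    by apply: ler_sum => k _; apply/halfHE.
  by rewrite -mulr_sumr sumr_const total -[(s + D) *+ _]mulr_natl.
have cb : (2 * N%:R - 2) * b <= s + D.
  rewrite -(ler_pM2l d_gt0) mulrCA [_ * b]mulrC vertexBE; lra.
have := (halfHE j z).1 (zH j); rewrite total => zj.
have c_gt0 : 0 < 2 * N%:R - 2 :> R by have := ler0n R #|K|; lra.
rewrite -(ler_pM2l c_gt0); rewrite /b in cb; lra.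
Qed.

Lemma sum_vertexK K : K != finset.set0 ->
  \sum_j (vertexK K ord0 j - m) = (2 * N%:R - 2) * (vertexB K - m).
Proof.
move=> K0; rewrite (bigID (mem K)) /=.
rewrite (eq_bigr (fun=> vertexB K - m)) => [|k kK]; last by rewrite mxE kK.
rewrite [X in _ + X](eq_bigr (fun l => u l - m)) => [|l /negbTE lK]; last by rewrite mxE lK.
rewrite sumr_const -[(vertexB K - m) *+ _]mulr_natl.
have [KT|KT] := eqVneq K [set: 'I_N]%SET.
  by rewrite KT vertexB_setT big_pred0 ?subrr ?mulr0 ?addr0 // => l; rewrite inE.
by have [_ <-] := vertexB_proper K0 KT; ring.
Qed.

Lemma vertexK_set0 : vertexK finset.set0 = \row_k u k.
Proof. by apply/rowP => k; rewrite !mxE inE. Qed.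

Lemma vertexK_or_gt K z : cut_box z -> (forall l, l \notin K -> z ord0 l = u l) ->
  z = vertexK K \/ exists2 k, k \in K & vertexB K < z ord0 k.
Proof.
move=> zP zU.
have [|no_gt] := pselect (exists2 k, k \in K & vertexB K < z ord0 k); first by right.
left; apply/rowP => k; rewrite mxE; case: ifPn => kK; last exact: zU.
have K0 : K != finset.set0 by apply/set0Pn; exists k.
apply/eqP; rewrite eq_le vertexB_le_coord // andbT leNgt; apply/negP => lt.
by apply: no_gt; exists k.
Qed.

Lemma vertexK_mem K : vertexK K \in vertices.
Proof. by apply: map_f; rewrite mem_enum powersetE finset.subsetT. Qed.

Lemma size_vertices : size vertices = (2 ^ N)%N.
Proof. by rewrite size_map -cardE card_powerset cardsT card_ord. Qed.

Hypothesis corner_in : cut_box (\row_k u k).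

Let m_le_u k : m <= u k.
Proof. by have [/(_ k) + _] := corner_in; rewrite mxE => /andP []. Qed.

Let corner_sum i : \sum_j (u j - m) <= (2 * N%:R - 2) * (u i - m).
Proof.
have := (halfHE i _).1 (corner_in.2 i).
by rewrite mxE (eq_bigr (fun j => u j - m)) // => j _; rewrite mxE.
Qed.

Lemma halfH_below_corner i z :
  (forall k, z ord0 k <= u k) -> z ord0 i = u i -> halfH m i z.
Proof.
move=> zu ziE; apply/halfHE; rewrite ziE; apply: le_trans (corner_sum i).
by apply: ler_sum => j _; rewrite lerD2r.
Qed.

Lemma m_le_vertexB K : K != finset.set0 -> m <= vertexB K.
Proof.
move=> K0; have [->|KT] := eqVneq K [set: 'I_N]%SET; first by rewrite vertexB_setT.
have [d_gt0 vertexBE] := vertexB_proper K0 KT.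
rewrite -subr_ge0 -(pmulr_lge0 _ d_gt0) vertexBE.
by apply: sumr_ge0 => l _; rewrite subr_ge0.
Qed.

Lemma vertexB_le_u K j : K != finset.set0 -> vertexB K <= u j.
Proof.
by move=> K0; have := vertexB_le_coord K0 corner_in _ j; rewrite mxE; apply=> l _; rewrite mxE.
Qed.

Lemma vertexK_in K : cut_box (vertexK K).
Proof.
have [->|K0] := eqVneq K finset.set0; first by rewrite vertexK_set0.
have vK_le_u k : vertexK K ord0 k <= u k.
  by rewrite mxE; case: ifP => _; [exact: vertexB_le_u|].
split=> [k|i].
  by rewrite vK_le_u andbT mxE; case: ifP => _; [exact: m_le_vertexB|exact: m_le_u].
have [iK|iK] := boolP (i \in K).
  by apply/halfHE; rewrite sum_vertexK // mxE iK.
by apply: halfH_below_corner => //; rewrite mxE (negbTE iK).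
Qed.

Lemma vertexK_vertex K : is_vertex cut_box (vertexK K).
Proof.
split=> [|x y t xP yP t0 t1 vE]; first exact: vertexK_in.
have coordE k : vertexK K ord0 k = t * x ord0 k + (1 - t) * y ord0 k.
  by rewrite vE !mxE.
have tt : 0 < t < 1 by rewrite t0 t1.
have xyU l : l \notin K -> x ord0 l = u l /\ y ord0 l = u l.
  move=> lK; have := coordE l; rewrite mxE (negbTE lK).
  by apply: convex_comb_eq_max tt _ _; [case/andP: (xP.1 l) | case/andP: (yP.1 l)].
apply/rowP => k; have [kK|kK] := boolP (k \in K); last by have [-> ->] := xyU k kK.
have K0 : K != finset.set0 by apply/set0Pn; exists k.
have xB := vertexB_le_coord K0 xP (fun l lK => (xyU l lK).1) k.
have yB := vertexB_le_coord K0 yP (fun l lK => (xyU l lK).2) k.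
by have := coordE k; rewrite mxE kK => /(convex_comb_eq_min tt xB yB) [-> ->].
Qed.

Lemma push_in_cut_box K z t : K != finset.set0 -> cut_box z ->
  (forall l, l \notin K -> z ord0 l = u l) -> 0 < t ->
  (forall k, k \in K -> z ord0 k - vertexB K <= t * (u k - vertexB K)) ->
  cut_box (vertexK K + t^-1 *: (z - vertexK K)).
Proof.
move=> K0 zP zU t_gt0 zt; set p := vertexK K; set q := p + _.
have w_gt0 : 0 < t^-1 by rewrite invr_gt0.
have qE j : q ord0 j = p ord0 j + t^-1 * (z ord0 j - p ord0 j) by rewrite !mxE.
have pK k : k \in K -> p ord0 k = vertexB K by move=> kK; rewrite mxE kK.
have qU l : l \notin K -> q ord0 l = u l.
  by move=> lK; rewrite qE mxE (negbTE lK) zU // subrr mulr0 addr0.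
have q_box k : m <= q ord0 k <= u k.
  have [kK|kK] := boolP (k \in K); last by rewrite qU // m_le_u lexx.
  have := ler_wpM2l (ltW w_gt0) (zt k kK); rewrite mulrA mulVf ?gt_eqF // mul1r.
  have : 0 <= t^-1 * (z ord0 k - vertexB K).
    by rewrite mulr_ge0 ?subr_ge0 ?(vertexB_le_coord K0 zP zU) ?ltW.
  have := m_le_vertexB K0; rewrite qE pK //; lra.
split=> // i; have [iK|iK] := boolP (i \in K); last first.
  by apply: halfH_below_corner => [k|]; [case/andP: (q_box k)|exact: qU].
apply/halfHE.
have -> : \sum_j (q ord0 j - m) = \sum_j (p ord0 j - m) +
    t^-1 * (\sum_j (z ord0 j - m) - \sum_j (p ord0 j - m)).
  rewrite (eq_bigr (fun j => (p ord0 j - m) + t^-1 * ((z ord0 j - m) - (p ord0 j - m)))).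
    by rewrite big_split /= -mulr_sumr -sumrB.
  by move=> j _; rewrite qE; ring.
rewrite sum_vertexK // qE pK //.
have := ler_wpM2l (ltW w_gt0) ((halfHE i z).1 (zP.2 i)); lra.
Qed.

Lemma cut_box_split K z k0 : k0 \in K -> cut_box z ->
  (forall l, l \notin K -> z ord0 l = u l) -> vertexB K < z ord0 k0 ->
  exists k t q, [/\ k \in K, 0 < t <= 1, cut_box q,
    (forall l, l \notin K :\ k -> q ord0 l = u l) & z = t *: q + (1 - t) *: vertexK K].
Proof.
move=> k0K zP zU ltk0; have K0 : K != finset.set0 by apply/set0Pn; exists k0.
set b := vertexB K in ltk0 *; set p := vertexK K.
have b_le_u j : b <= u j := vertexB_le_u j K0.
have b_le_z j : b <= z ord0 j := vertexB_le_coord K0 zP zU j.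
have z_le_u j : z ord0 j <= u j by case/andP: (zP.1 j).
(* t is the largest ratio (z_j - b) / (u_j - b) over j in K; it is attained at
   k, where the pushed point reaches its upper bound. *)
pose r j := (z ord0 j - b) / (u j - b).
have [k /= kK r_max] := @arg_maxP _ _ _ k0 (fun j => j \in K) r k0K.
set t := r k in r_max.
have t_gt0 : 0 < t.
  apply: lt_le_trans (r_max k0 k0K).
  by rewrite divr_gt0 ?subr_gt0 //; exact: lt_le_trans (z_le_u k0).
have zkb : z ord0 k - b != 0.
  by apply: contraTneq t_gt0 => e; rewrite /t /r e mul0r ltxx.
have ukb : u k - b != 0.
  by apply: contraTneq t_gt0 => e; rewrite /t /r e invr0 mulr0 ltxx.
have zt j : j \in K -> z ord0 j - b <= t * (u j - b).
  move=> jK; have [ujb|ujb] := eqVneq (u j - b) 0.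
    by rewrite ujb mulr0; have := z_le_u j; have := b_le_z j; lra.
  by have : r j <= t := r_max j jK; rewrite /r ler_pdivrMr ?lt_def ?ujb ?subr_ge0 ?b_le_u.
have t_le1 : t <= 1.
  by rewrite /t /r ler_pdivrMr ?lt_def ?ukb ?subr_ge0 ?b_le_u // mul1r lerD2r.
exists k, t, (p + t^-1 *: (z - p)); split=> //.
- by rewrite t_gt0.
- exact: push_in_cut_box.
- move=> l; rewrite !inE negb_and negbK => /orP [/eqP ->|lK]; rewrite !mxE.
    by rewrite kK -/b /t /r; field; rewrite zkb ukb.
  by rewrite (negbTE lK) zU // subrr mulr0 addr0.
- by apply/rowP => j; rewrite !mxE; field; rewrite gt_eqF.
Qed.

Lemma cut_box_agree_sub_hull n K z : (#|K| <= n)%N -> cut_box z ->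
  (forall l, l \notin K -> z ord0 l = u l) -> conv_hull_seq vertices z.
Proof.
elim: n K z => [|n IH] K z Kn zP zU;
  have [->|[k0 k0K ltk0]] := vertexK_or_gt zP zU; try exact/conv_hull_mem/vertexK_mem.
  by move: Kn; rewrite leqn0 cards_eq0 => /eqP K0; rewrite K0 inE in k0K.
have [k [t [q [kK /andP [t0 t1] qP qU ->]]]] := cut_box_split k0K zP zU ltk0.
apply: conv_hull_convex; [|exact/conv_hull_mem/vertexK_mem|by rewrite ltW].
by apply: (IH (K :\ k)) => //; move: Kn; rewrite (cardsD1 k K) kK.
Qed.

Lemma cut_box_sub_hull : cut_box `<=` conv_hull_seq vertices.
Proof.
move=> z zP; apply: (cut_box_agree_sub_hull (leqnn #|[set: 'I_N]%SET|) zP).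
by move=> l; rewrite inE.
Qed.

Lemma vertices_in x : x \in vertices -> cut_box x.
Proof. by case/mapP => K _ ->; exact: vertexK_in. Qed.

Lemma cut_box_polytope : cut_box = conv_hull_seq vertices.
Proof.
apply/seteqP; split; first exact: cut_box_sub_hull.
exact: conv_hull_sub cut_box_convex vertices_in.
Qed.

Lemma is_vertex_cut_box : is_vertex cut_box = [set vertexK K | K in [set: {set 'I_N}]].
Proof.
apply/seteqP; split=> [v vV|_ [K _ <-]]; last exact: vertexK_vertex.
have := conv_hull_vertex_mem cut_box_convex vertices_in vV (cut_box_sub_hull vV.1).
by case/mapP => K _ ->; exists K.
Qed.

End CutBox.

Section Mbound.
Variables (R : realType) (N : nat) (m M : R) (a : 'I_N -> R).
Hypothesis ha : forall i, m <= a i <= M.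

Let sum_a_ge i : a i - m <= \sum_j a j - N%:R * m.
Proof.
have -> : \sum_j a j - N%:R * m = \sum_j (a j - m).
  by rewrite sumrB sumr_const card_ord mulr_natl.
by rewrite (bigD1 i) //= lerDl sumr_ge0 // => j _; rewrite subr_ge0; case/andP: (ha j).
Qed.

Lemma Mbound_ge i : m <= Mbound m M a i.
Proof.
have N_ge1 : 1 <= N%:R :> R by rewrite ler1n (leq_ltn_trans _ (ltn_ord i)).
have := sum_a_ge i; have /andP [ai aM] := ha i.
rewrite /Mbound ler_pdivlMl ?(lt_le_trans ltr01) // le_min => a_sum.
by apply/andP; split; nra.
Qed.

Lemma sum_Mbound_le i :
  \sum_j Mbound m M a j <= (2 * N%:R - 2) * Mbound m M a i - (N%:R - 2) * m.
Proof.
set n : R := N%:R; set S := \sum_j a j.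
have N_gt0 : (0 < N)%N := leq_ltn_trans (leq0n i) (ltn_ord i).
have n_gt0 : 0 < n by rewrite ltr0n.
have consecutive : 0 <= (n - 1) * (n - 2).
  have [N1|N_ne1] := eqVneq N 1%N; first by rewrite /n N1 subrr mul0r.
  have : 2 <= n by rewrite (ler_nat R 2 N) ltn_neqAle eq_sym N_ne1 N_gt0.
  by move=> n2; rewrite mulr_ge0 // subr_ge0 (le_trans _ n2) ?ler1n.
set A := m + (n - 1) * M; pose X j := (n - 2) * (a j - m) + S.
have MbE j : Mbound m M a j = n^-1 * Num.min A (X j) by [].
rewrite (eq_bigr _ (fun j _ => MbE j)) MbE -mulr_sumr.
suff : \sum_j Num.min A (X j) <= (2 * n - 2) * Num.min A (X i) - n * (n - 2) * m.
  have -> : (2 * n - 2) * (n^-1 * Num.min A (X i)) - (n - 2) * m =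
      n^-1 * ((2 * n - 2) * Num.min A (X i) - n * (n - 2) * m) by field; rewrite gt_eqF.
  by rewrite ler_pM2l ?invr_gt0.
have /andP [ai aM] := ha i.
(* The slack is (n - 1) (n - 2) (M - m) when the minimum at i is A, and at
   least 2 (n - 1) (n - 2) (a_i - m) otherwise. *)
have [AX|XA] := leP A (X i).
  apply: le_trans (_ : \sum_(j < N) A <= _).
    by apply: ler_sum => j _; rewrite ge_min lexx.
  rewrite sumr_const card_ord -[A *+ N]mulr_natl -/n /A.
  have Mm : 0 <= M - m by rewrite subr_ge0 (le_trans ai aM).
  have := mulr_ge0 consecutive Mm; lra.
apply: le_trans (_ : \sum_j X j <= _).
  by apply: ler_sum => j _; rewrite ge_min lexx orbT.
have -> : \sum_j X j = (n - 2) * (S - n * m) + n * S.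
  rewrite big_split /= -mulr_sumr sumrB !sumr_const card_ord.
  by rewrite -[m *+ N]mulr_natl -[S *+ N]mulr_natl.
have am : 0 <= a i - m by rewrite subr_ge0.
have := mulr_ge0 consecutive am; rewrite /X; lra.
Qed.

Lemma Mbound_corner : cut_box m (Mbound m M a) (\row_k Mbound m M a k).
Proof.
split=> [k|i]; first by rewrite mxE Mbound_ge lexx.
rewrite /halfH /= mxE (eq_bigr (fun j => Mbound m M a j)) => [|j _]; last by rewrite mxE.
exact: sum_Mbound_le.
Qed.

Lemma zK_vertexK K : (2 < N)%N -> zK m M a K = vertexK m (Mbound m M a) K.
Proof.
move=> N3; apply/rowP => k; rewrite !mxE; case: ifP => // _.
have cardKC : #|K|%:R + #|~: K|%:R = N%:R :> R by rewrite -natrD cardsC card_ord.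
have d_gt0 : 0 < 2 * N%:R - 2 - #|K|%:R :> R.
  have : 3 <= N%:R :> R by rewrite (ler_nat R 3 N).
  have := ler0n R #|~: K|; lra.
have notKE : \sum_(l < N | l \notin K) (Mbound m M a l - m) =
    \sum_(l < N | l \notin K) Mbound m M a l - (N%:R - #|K|%:R) * m.
  rewrite sumrB (eq_bigl (fun l => l \in ~: K) (fun=> m)) => [|l]; last by rewrite inE.
  by rewrite sumr_const -[m *+ _]mulr_natl -cardKC [_ + #|~: K|%:R]addrC addrK.
rewrite /BK /vertexB notKE; field; exact: lt0r_neq0.
Qed.

End Mbound.

Lemma Mbound_dim2 (R : realType) (m M : R) (a : 'I_2 -> R) i j :
  Mbound m M a i = Mbound m M a j.
Proof. by rewrite /Mbound subrr !mul0r !add0r. Qed.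

Lemma cut_box_dim1 (R : realType) (m : R) (u : 'I_1 -> R) : m <= u ord0 ->
  cut_box m u = [set z : 'rV[R]_1 | forall k, z ord0 k = m].
Proof.
move=> mu; apply/seteqP; split=> z.
  move=> [zb zH] k; rewrite (ord1 k); have := zH ord0; rewrite /halfH /= big_ord1.
  case/andP: (zb ord0) => ? ?; lra.
move=> zm; split=> [k|i]; first by rewrite zm (ord1 k) lexx mu.
rewrite /halfH /= big_ord1 !zm; lra.
Qed.

Lemma cut_box_dim2 (R : realType) (m : R) (u : 'I_2 -> R) : u ord0 = u ord_max ->
  cut_box m u = [set z : 'rV[R]_2 | exists t, m <= t <= u ord0 /\ forall k, z ord0 k = t].
Proof.
have k2 (k : 'I_2) : k = ord0 \/ k = ord_max.
  by case: k => [[|[|//]] hk]; [left|right]; apply: val_inj.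
have sum2 (z : 'rV[R]_2) : \sum_j z ord0 j = z ord0 ord0 + z ord0 ord_max.
  by rewrite big_ord_recl big_ord1; congr (_ + z ord0 _); apply: val_inj.
move=> u01; apply/seteqP; split=> z.
  move=> [zb zH]; exists (z ord0 ord0); split=> [|k]; first exact: zb.
  have := zH ord0; have := zH ord_max; rewrite /halfH /= !sum2 => ? ?.
  by case: (k2 k) => ->; lra.
move=> [t [/andP [mt tu] zt]]; split=> [k|i].
  by rewrite zt mt; case: (k2 k) => ->; rewrite -?u01.
by rewrite /halfH /= sum2 !zt; lra.
Qed.

Theorem proposition8 (R : realType) (N : nat) (m M : R) (a : 'I_N -> R)
  (hm : 0 < m) (hM : M < 1) (hmM : m < M)
  (ha : forall i : 'I_N, (m <= a i)%R && (a i <= M)%R) :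
  let P := P8set m M a in
  [/\ closed P, convex_set (P : set (convex_lmodType 'rV[R]_N)) & is_polytope P] /\
  ((2 < N)%N ->
     (exists s : seq 'rV[R]_N, (size s <= 2 ^ N)%N /\ is_vertex P `<=` [set` s]) /\
     is_vertex P = [set zK m M a K | K in [set: {set 'I_N}]]) /\
  (N = 1%N -> P = [set z : 'rV[R]_N | forall k, z ord0 k = m]) /\
  (N = 2%N -> forall i1 : 'I_N, val i1 = 0%N ->
     P = [set z : 'rV[R]_N | exists t : R, m <= t <= Mbound m M a i1 /\
                                forall k, z ord0 k = t]).
Proof.
move=> P; have -> : P = cut_box m (Mbound m M a) by [].
have corner := Mbound_corner ha.
split; [split|split; [|split]].
- exact: cut_box_closed.
- exact/is_convex_convex_set/cut_box_convex.
- by exists (vertices m (Mbound m M a)); exact: cut_box_polytope.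
- move=> N3; rewrite is_vertex_cut_box //; split.
    exists (vertices m (Mbound m M a)); rewrite size_vertices; split=> // _ [K _ <-].
    exact: vertexK_mem.
  by apply: eq_imagel => K _; rewrite zK_vertexK.
- by move=> N1; subst N; apply: cut_box_dim1; exact: Mbound_ge.
- move=> N2 i1 i10; subst N; have -> : i1 = ord0 by apply: val_inj.
  by apply: cut_box_dim2; exact: Mbound_dim2.
Qed.
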